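(* Let $F:(\mathbb R^n\times\mathbb R,0)\to(\mathbb R^m,0)$, $n\ge m\ge 2$, $F=(f_1,\dots,f_m)$, be an analytic germ satisfying: there exists $0<\theta<1$ such that for every $x_0\in F_0^{-1}(0)\cap\operatorname{Sing}F_0\setminus\{0\}$ there is $c(x_0)>0$ with $\|F(x,t)\|^\theta\le c(x_0)\nu_{F_t}(x)$ for all $(x,t)\notin\operatorname{Sing}\widetilde F$ close enough to $(x_0,0)$. Let $L\in\mathbb N$ with $\theta<\frac{L-1}{L}$, let $X=\{(x,t,s)\in\mathbb R^n\times\mathbb R\times\mathbb R^m: f_i(x,t)=s_i^L,\ i=1,\dots,m\}$ and $\pi:X\to\mathbb R$, $\pi(x,t,s)=t$. Let $x_0\in F_0^{-1}(0)\cap\operatorname{Sing}F_0\setminus\{0\}$ and let $(x_k,t_k,s_k)\in X$ be a sequence with $(x_k,t_k)\notin\operatorname{Sing}\widetilde F$, $(x_k,t_k,s_k)\to(x_0,0,0)$, such that the $n$-dimensional tangent spaces $T_{(x_k,t_k,s_k)}(\pi^{-1}(t_k)\cap X)$ converge in the Grassmannian to a space $T$. Then $T=A\times\{0\}\times\mathbb R^m\subset\mathbb R^n\times\mathbb R\times\mathbb R^m$ for some linear subspace $A\subset\mathbb R^n$ of dimension $n-m$.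
   Context: $F_t=F(\cdot,t)$, $F_0=F(\cdot,0)$, $\widetilde F(x,t)=(F(x,t),t)$. $\nu_{F_t}(x):=\min_{\|a\|=1}\bigl\|\sum_{i=1}^m a_i\operatorname{grad}_x f_i(x,t)\bigr\|$ with $\operatorname{grad}_x f_i=(\partial f_i/\partial x_1,\dots,\partial f_i/\partial x_n)$. $\operatorname{Sing}$ of a map denotes the set where its Jacobian has rank less than the target dimension; note $(x,t)\notin\operatorname{Sing}\widetilde F$ iff $\nu_{F_t}(x)>0$, so near such points $\pi^{-1}(t)\cap X$ is a smooth $n$-dimensional manifold. *)

From HB Require Import structures.
From mathcomp Require Import all_boot all_order all_algebra.
From mathcomp Require Import all_classical all_reals all_analysis.
Set Implicit Arguments. Unset Strict Implicit. Unset Printing Implicit Defensive.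
Import Order.TTheory GRing.Theory Num.Theory.
Import numFieldNormedType.Exports.
Local Open Scope classical_set_scope.
Local Open Scope ring_scope.

Section Defs.
Variable R : realType.

Definition enorm (N : nat) (v : 'rV[R]_N) : R := Num.sqrt (\sum_i v 0 i ^+ 2).

Definition pseries_partial (N : nat) (c : ('I_N -> nat) -> R) (a x : 'rV[R]_N)
    (d : nat) : R :=
  \sum_(al : {ffun 'I_N -> 'I_d.+1} | (\sum_i (al i : nat) <= d)%N)
     c (fun i => (al i : nat)) * \prod_i (x 0 i - a 0 i) ^+ (al i).

Definition pseries_abs_partial (N : nat) (c : ('I_N -> nat) -> R) (a x : 'rV[R]_N)
    (d : nat) : R :=
  \sum_(al : {ffun 'I_N -> 'I_d.+1} | (\sum_i (al i : nat) <= d)%N)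
     `|c (fun i => (al i : nat))| * \prod_i `|x 0 i - a 0 i| ^+ (al i).

Definition analytic_at (N : nat) (g : 'rV[R]_N -> R) (a : 'rV[R]_N) : Prop :=
  exists r : R, 0 < r /\ exists c : ('I_N -> nat) -> R,
    forall x, enorm (x - a) < r ->
      (exists M : R, forall d, pseries_abs_partial c a x d <= M) /\
      (pseries_partial c a x @ \oo --> g x).

Definition analytic_on (N : nat) (U : set 'rV[R]_N) (g : 'rV[R]_N -> R) : Prop :=
  forall a, U a -> analytic_at g a.

Definition xt (n : nat) (x : 'rV[R]_n) (t : R) : 'rV[R]_(n + 1) := row_mx x t%:M.

Section Map.
Variables (n m : nat) (F : 'rV[R]_n -> R -> 'rV[R]_m).

Definition JxF (t : R) (x : 'rV[R]_n) : 'M[R]_(m, n) :=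
  \matrix_(i < m, j < n) 'D_(delta_mx 0 j) (fun y => F y t 0 i) x.

Definition dtF (x : 'rV[R]_n) (t : R) : 'cV[R]_m :=
  \col_(i < m) 'D_1 (fun s : R => F x s 0 i) t.

Definition SingFt (t : R) (x : 'rV[R]_n) : bool := (\rank (JxF t x) < m)%N.

(* Jacobian of Ftilde(x,t) = (F(x,t), t) : R^(n+1) -> R^(m+1) *)
Definition JFtilde (x : 'rV[R]_n) (t : R) : 'M[R]_(m + 1, n + 1) :=
  block_mx (JxF t x) (dtF x t) 0 1%:M.

Definition SingFtilde (x : 'rV[R]_n) (t : R) : bool :=
  (\rank (JFtilde x t) < m + 1)%N.

Definition nuF (t : R) (x : 'rV[R]_n) : R :=
  inf [set enorm (a *m JxF t x) | a in [set a : 'rV[R]_m | enorm a = 1]].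

(* Tangent space at (x,t,s) of pi^{-1}(t) cap X, X = {f_i(x,t) = s_i^L},
   as a subspace of R^n x R x R^m (coordinates ordered x, t, s):
   kernel of the differential of (x,t,s) |-> (F(x,t) - s^L, t). *)
Definition tangent_fibre (L : nat) (x : 'rV[R]_n) (t : R) (s : 'rV[R]_m)
    : 'M[R]_(n + 1 + m) :=
  kermx (col_mx
    (col_mx (row_mx (JxF t x)^T (0 : 'M[R]_(n, 1)))
            (row_mx (dtF x t)^T (1%:M : 'M[R]_1)))
    (row_mx (- (L%:R) *: diag_mx (map_mx (fun a => a ^+ L.-1) s))
            (0 : 'M[R]_(m, 1)))).
End Map.

(* orthogonal projection matrix onto the row space of U; the Grassmannian
   topology is the one induced by U |-> orthoproj U *)
Definition orthoproj (N k : nat) (U : 'M[R]_(k, N)) : 'M[R]_N :=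
  let B := row_base U in (B^T *m invmx (B *m B^T)) *m B.

(* the subspace A x {0} x R^m of R^n x R x R^m *)
Definition embedA (n m : nat) (A : 'M[R]_n) : 'M[R]_(n + m, n + 1 + m) :=
  col_mx (row_mx (row_mx A (0 : 'M[R]_(n, 1))) (0 : 'M[R]_(n, m)))
         (row_mx (0 : 'M[R]_(m, n + 1)) (1%:M : 'M[R]_m)).

End Defs.

(* The direction of t is orthogonal to every fibre tangent space, hence to T.
   For an s-direction e_j, let J be the x-Jacobian of F at a point (x, t, s) of
   X. The vector (w, 0, e_j) with w = L s_j^(L-1) e_j (J J^T)^-1 J is tangent
   to the fibre, and |w| <= L |s_j|^(L-1) / nu. Since |s_j|^L <= |F| and
   |F|^theta <= C nu by the gradient inequality, |w| <= L C |s_j|^(L-1-L theta),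
   which tends to 0 because theta < (L-1)/L. Passing to the limit in the
   orthogonal projections gives e_j in T. A subspace of dimension n containing
   {0} x {0} x R^m and orthogonal to the t-axis is A x {0} x R^m with
   dim A = n - m. *)

From HB Require Import structures.
From mathcomp Require Import all_boot all_order all_algebra.
From mathcomp Require Import all_classical all_reals all_analysis.
From mathcomp Require Import ring lra.
Import Order.TTheory GRing.Theory Num.Theory.
Import numFieldNormedType.Exports.
Local Open Scope classical_set_scope.
Local Open Scope ring_scope.

Set Implicit Arguments.
Unset Strict Implicit.
Unset Printing Implicit Defensive.

Section Gram.
Variable R : realFieldType.

Lemma row_mul_tr_eq0 N (w : 'rV[R]_N) : (w *m w^T) 0 0 = 0 -> w = 0.
Proof.
rewrite mxE (eq_bigr (fun j => w 0 j ^+ 2)) => [|j _]; last by rewrite mxE expr2.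
move/eqP; rewrite psumr_eq0 => [/allP w0|j _]; last exact: sqr_ge0.
apply/rowP => j; apply/eqP; rewrite mxE -sqrf_eq0.
exact: implyP (w0 j (mem_index_enum j)) isT.
Qed.

Lemma row_free_gram_unit p N (B : 'M[R]_(p, N)) :
  row_free B -> B *m B^T \in unitmx.
Proof.
move=> freeB; rewrite -row_free_unit -kermx_eq0; apply/eqP/row_matrixP => i.
set K := kermx _; rewrite row0; apply: (row_free_inj freeB); rewrite mul0mx.
apply: row_mul_tr_eq0.
rewrite trmx_mul !mulmxA -(mulmxA (row i K)) -row_mul mulmx_ker row0.
by rewrite !mul0mx mxE.
Qed.

Lemma gram_projK r N (B : 'M[R]_(r, N)) : B *m B^T \in unitmx ->
  B *m (B^T *m invmx (B *m B^T) *m B) = B.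
Proof. by move=> gramB; rewrite !mulmxA mulmxV ?mul1mx. Qed.

Lemma gram_projKtr r N (B : 'M[R]_(r, N)) : B *m B^T \in unitmx ->
  B^T *m invmx (B *m B^T) *m B *m B^T = B^T.
Proof. by move=> gramB; rewrite -!mulmxA mulVmx ?mulmx1. Qed.

End Gram.

Section Orthoproj.
Variable R : realType.

Lemma orthoprojE N k (U : 'M[R]_(k, N)) : orthoproj U =
  (row_base U)^T *m invmx (row_base U *m (row_base U)^T) *m row_base U.
Proof. by []. Qed.

Lemma orthoproj_id N k p (U : 'M[R]_(k, N)) (u : 'M[R]_(p, N)) :
  (u <= U)%MS -> u *m orthoproj U = u.
Proof.
rewrite -(eq_row_base U) => /submxP[y ->]; rewrite orthoprojE.
by rewrite -(mulmxA y) gram_projK ?row_free_gram_unit ?row_base_free.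
Qed.

Lemma orthoproj_sub N k (U : 'M[R]_(k, N)) : (orthoproj U <= U)%MS.
Proof. by rewrite orthoprojE (submx_trans (submxMl _ _)) ?eq_row_base. Qed.

Lemma trmx_mul_orthoproj_eq0 N k (U : 'M[R]_(k, N)) (z : 'cV[R]_N) :
  (z^T *m orthoproj U == 0) = (U *m z == 0).
Proof.
have ker_sub p q (A : 'M[R]_(p, N)) (B : 'M[R]_(q, N)) :
    (A <= B)%MS -> B *m z = 0 -> A *m z = 0.
  by case/submxP => D -> Bz; rewrite -mulmxA Bz mulmx0.
have baseU : (row_base U :=: U)%MS := eq_row_base U.
rewrite orthoprojE; set B := row_base U in baseU *.
have gramB : B *m B^T \in unitmx by rewrite row_free_gram_unit ?row_base_free.
apply/eqP/eqP => [zP | Uz].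
  apply: (ker_sub _ _ U B); first by rewrite baseU.
  apply: trmx_inj; rewrite trmx_mul trmx0.
  by rewrite -(gram_projKtr gramB) mulmxA zP mul0mx.
have Bz : B *m z = 0 by apply: ker_sub Uz; rewrite baseU.
by rewrite !mulmxA -trmx_mul Bz trmx0 !mul0mx.
Qed.

End Orthoproj.

Section Enorm.
Variable R : realType.

Lemma enorm_ge0 N (v : 'rV[R]_N) : 0 <= enorm v.
Proof. exact: sqrtr_ge0. Qed.

Lemma sum_sqr_ge0 N (v : 'rV[R]_N) : 0 <= \sum_i v 0 i ^+ 2.
Proof. by apply: sumr_ge0 => i _; exact: sqr_ge0. Qed.

Lemma enorm_sqr N (v : 'rV[R]_N) : enorm v ^+ 2 = (v *m v^T) 0 0.
Proof.
rewrite /enorm sqr_sqrtr ?sum_sqr_ge0 // mxE.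
by apply: eq_bigr => i _; rewrite mxE expr2.
Qed.

Lemma enorm0 N : enorm (0 : 'rV[R]_N) = 0.
Proof. by rewrite /enorm big1 ?sqrtr0 // => i _; rewrite mxE expr0n. Qed.

Lemma enorm_gt0 N (v : 'rV[R]_N) : v != 0 -> 0 < enorm v.
Proof.
move=> v0; rewrite lt_def enorm_ge0 andbT; apply: contra v0 => /eqP ev0.
by apply/eqP/row_mul_tr_eq0; rewrite -enorm_sqr ev0 expr0n.
Qed.

Lemma enormZ N (c : R) (v : 'rV[R]_N) : enorm (c *: v) = `|c| * enorm v.
Proof.
rewrite /enorm (eq_bigr (fun i => c ^+ 2 * v 0 i ^+ 2)) => [|i _]; last first.
  by rewrite mxE exprMn.
by rewrite -mulr_sumr sqrtrM ?sqr_ge0 // sqrtr_sqr.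
Qed.

Lemma coord_le_enorm N (v : 'rV[R]_N) i : `|v 0 i| <= enorm v.
Proof.
rewrite /enorm -sqrtr_sqr ler_sqrt ?sum_sqr_ge0 // (bigD1 i) //= lerDl.
by apply: sumr_ge0 => j _; exact: sqr_ge0.
Qed.

Lemma normr_le_enorm N (v : 'rV[R]_N) : `|v| <= enorm v.
Proof.
rewrite [leLHS]/Num.Def.normr /= mx_normrE; apply: bigmax_le => [|[i j] _].
  exact: enorm_ge0.
by rewrite [i]ord1 coord_le_enorm.
Qed.

Lemma enorm_continuous N : continuous (@enorm R N).
Proof.
move=> v; apply: (continuous_comp _ (@sqrt_continuous R _)).
apply: (@continuous_big _ _ +%R 0 xpredT add_continuous) => i _ w.
exact: continuous_comp (@coord_continuous R 1 N 0 i w)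
  (@exprn_continuous R 2 _).
Qed.

End Enorm.

Section Conorm.
Variable R : realType.

Definition conorm m n (J : 'M[R]_(m, n)) : R :=
  inf [set enorm (a *m J) | a in [set a : 'rV[R]_m | enorm a = 1]].

Lemma nuFE n m (F : 'rV[R]_n -> R -> 'rV[R]_m) t x :
  nuF F t x = conorm (JxF F t x).
Proof. by []. Qed.

Lemma conorm_mul_le m n (J : 'M[R]_(m, n)) (a : 'rV[R]_m) :
  conorm J * enorm a <= enorm (a *m J).
Proof.
have [->|a0] := eqVneq a 0; first by rewrite mul0mx !enorm0 mulr0.
have a_gt0 := enorm_gt0 a0; rewrite -ler_pdivlMr //.
apply: ge_inf; first by exists 0 => _ [b _ <-]; exact: enorm_ge0.
exists ((enorm a)^-1 *: a).
  by rewrite /= enormZ ger0_norm ?invr_ge0 ?enorm_ge0 // mulVf // gt_eqF.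
by rewrite -scalemxAl enormZ ger0_norm ?invr_ge0 ?enorm_ge0 // mulrC.
Qed.

Lemma conorm_gram_le m n (J : 'M[R]_(m, n)) (j : 'I_m) :
  J *m J^T \in unitmx ->
  conorm J * enorm (delta_mx 0 j *m invmx (J *m J^T) *m J) <= 1.
Proof.
move=> gramJ; set a := delta_mx 0 j *m _; set b := a *m J.
have [nu_le0|nu_gt0] := leP (conorm J) 0.
  by rewrite (le_trans _ ler01) // mulr_le0_ge0 ?enorm_ge0.
have [b0|b_neq0] := eqVneq b 0.
  by rewrite b0 enorm0 mulr0 ler01.
have b_gt0 := enorm_gt0 b_neq0.
have bb : enorm b ^+ 2 = a 0 j.
  rewrite enorm_sqr /b trmx_mul mulmxA -(mulmxA a J) /a.
  by rewrite -(mulmxA _ (invmx _)) mulVmx // mulmx1 -!rowE !mxE.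
have : conorm J * enorm b ^+ 2 <= enorm b.
  apply: le_trans (conorm_mul_le J a); rewrite ler_pM2l // bb.
  exact: le_trans (ler_norm _) (coord_le_enorm a j).
by rewrite expr2 mulrA -ler_pdivlMr // divff // gt_eqF.
Qed.

End Conorm.

Section FibreTangent.
Variables (R : realType) (n m : nat).
Implicit Types (F : 'rV[R]_n -> R -> 'rV[R]_m) (x : 'rV[R]_n) (t : R).

Definition t_axis : 'cV[R]_(n + 1 + m) := col_mx (col_mx 0 1%:M) 0.
Definition x_embed : 'M[R]_(n, n + 1 + m) := row_mx (row_mx 1%:M 0) 0.
Definition s_embed : 'M[R]_(m, n + 1 + m) := row_mx 0 1%:M.

Definition s_lift (J : 'M[R]_(m, n)) (L : nat) (s : 'rV[R]_m) (j : 'I_m) :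
    'rV[R]_n :=
  (L%:R * s 0 j ^+ L.-1) *: (delta_mx 0 j *m invmx (J *m J^T) *m J).

Lemma tangent_fibre_t_axis F L x t s : tangent_fibre F L x t s *m t_axis = 0.
Proof.
rewrite /tangent_fibre; set M := col_mx _ _.
have -> : t_axis = M *m col_mx 0 1%:M.
  by rewrite !mul_col_mx !mul_row_col !mulmx0 !mul0mx !mulmx1 !add0r.
by rewrite mulmxA mulmx_ker mul0mx.
Qed.

Lemma row_free_JxF F x t : ~~ SingFtilde F x t -> row_free (JxF F t x).
Proof.
rewrite /SingFtilde -leqNgt => rankJ.
have freeJ : row_free (JFtilde F x t) by rewrite /row_free eqn_leq rank_leq_row.
rewrite -kermx_eq0; apply/eqP.
set K := kermx (JxF F t x); set W := row_mx K (- (K *m dtF F x t)).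
have : W = 0.
  apply: (row_free_inj freeJ); rewrite mul0mx /W /JFtilde mul_row_block.
  by rewrite /K mulmx_ker !mulmx0 addr0 mulmx1 addrN row_mx0.
by move/eqP; rewrite row_mx_eq0 => /andP[/eqP].
Qed.

Lemma tangent_fibre_s_lift F L x t s j : ~~ SingFtilde F x t ->
  ((row j s_embed + s_lift (JxF F t x) L s j *m x_embed)%R
     <= tangent_fibre F L x t s)%MS.
Proof.
move=> /row_free_JxF/row_free_gram_unit gramJ.
rewrite /tangent_fibre; apply/sub_kermxP; set M := col_mx _ _.
have -> : row j s_embed = row_mx 0 (delta_mx 0 j).
  by rewrite row_row_mx row0 row1.
have xM : x_embed *m M = row_mx (JxF F t x)^T 0.
  by rewrite /M /x_embed !mul_row_col !mul1mx !mul0mx !addr0.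
rewrite mulmxDl -mulmxA xM /M mul_row_col mul0mx add0r.
rewrite !mul_mx_row !mulmx0 add_row_mx addr0 /s_lift.
rewrite -scalemxAr -scalemxAl -!mulmxA mulVmx // mulmx1 -rowE row_diag_mx mxE.
by rewrite scalerA -scalerDl mulNr addNr scale0r row_mx0.
Qed.

Lemma enorm_s_lift_le (J : 'M[R]_(m, n)) L (s Fv : 'rV[R]_m) j (theta C : R) :
  J *m J^T \in unitmx -> (2 <= L)%N -> 0 <= theta -> 0 <= C ->
  Fv 0 j = s 0 j ^+ L -> enorm Fv `^ theta <= C * conorm J ->
  enorm (s_lift J L s j) <= L%:R * C * `|s 0 j| `^ (L%:R - 1 - L%:R * theta).
Proof.
move=> gramJ L2 theta0 C0 Fj gradJ.
rewrite /s_lift enormZ normrM normrX (ger0_norm (ler0n _ _)).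
set b := delta_mx 0 j *m _ *m J; set sj := `|s 0 j|; set al := _ - _ * theta.
have sj0 : 0 <= sj := normr_ge0 _.
have [-> | sj_neq0] := eqVneq sj 0.
  rewrite expr0n /= (_ : L.-1 == 0%N = false); last by case: (L) L2 => [|[]].
  by rewrite mulr0 mul0r !mulr_ge0 ?powR_ge0.
have sjL : sj `^ (L%:R * theta) <= C * conorm J.
  apply: le_trans gradJ; rewrite powRrM powR_mulrn //.
  apply: ge0_ler_powR; rewrite ?nnegrE ?exprn_ge0 ?enorm_ge0 //.
  by rewrite /sj -normrX -Fj coord_le_enorm.
have sjLb : sj `^ (L%:R * theta) * enorm b <= C.
  apply: le_trans (ler_wpM2r (enorm_ge0 b) sjL) _.
  by rewrite -mulrA ler_piMr // conorm_gram_le.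
have -> : sj ^+ L.-1 = sj `^ al * sj `^ (L%:R * theta).
  rewrite -powRD ?sj_neq0 ?implybT // /al subrK -powR_mulrn //.
  by rewrite -subn1 natrB //; case: (L) L2.
have -> : L%:R * (sj `^ al * sj `^ (L%:R * theta)) * enorm b =
          L%:R * sj `^ al * (sj `^ (L%:R * theta) * enorm b) by ring.
by rewrite [leRHS]mulrAC ler_wpM2l // mulr_ge0 ?powR_ge0.
Qed.

End FibreTangent.

Arguments t_axis {R n m}.
Arguments x_embed {R n m}.
Arguments s_embed {R n m}.

Section MatrixLimits.
Context {T : Type} {F : set_system T} {FF : Filter F} {K : realFieldType}.

Lemma cvg_mxP p q (M : T -> 'M[K]_(p, q)) (M0 : 'M[K]_(p, q)) :
  M @ F --> M0 <-> forall i j, (fun x => M x i j) @ F --> M0 i j.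
Proof.
split => [MM0 i j | MM0].
  exact: cvg_comp MM0 (@coord_continuous K p q i j M0).
apply/cvgrPdist_le => e e0; near=> x.
rewrite [leLHS]/Num.Def.normr /= mx_normrE (bigmax_le _ (ltW e0)) // => ij _.
rewrite !mxE /=; move: ij; near: x; apply: filter_forall => -[i j].
exact: (cvgrPdist_le _ _).1 (MM0 i j) e e0.
Unshelve. all: by end_near. Qed.

Lemma cvg_mulmx p q r (A : T -> 'M[K]_(p, q)) (B : T -> 'M[K]_(q, r))
    (A0 : 'M[K]_(p, q)) (B0 : 'M[K]_(q, r)) :
  A @ F --> A0 -> B @ F --> B0 -> (fun x => A x *m B x) @ F --> A0 *m B0.
Proof.
move=> /cvg_mxP AA0 /cvg_mxP BB0; apply/cvg_mxP => i j.
rewrite mxE; under eq_cvg do rewrite mxE.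
by apply: (cvg_big add_continuous) => // l _; exact: cvgM.
Qed.

End MatrixLimits.

Lemma powR_norm_cvg0 (R : realType) {T : Type} {F : set_system T}
    {FF : Filter F} (u : T -> R) (a : R) :
  0 < a -> u @ F --> 0 -> (fun x => `|u x| `^ a) @ F --> 0.
Proof.
move=> a0 /cvgr0Pnorm_lt u0; apply/cvgr0Pnorm_lt => e e0.
apply: filterS (u0 _ (powR_gt0 (a^-1) e0)) => x ux.
have eE : (e `^ a^-1) `^ a = e by rewrite -powRrM mulVf ?gt_eqF // powRr1 ?ltW.
rewrite ger0_norm ?powR_ge0 // -eE.
by apply: gt0_ltr_powR; rewrite ?nnegrE ?normr_ge0 ?powR_ge0.
Qed.

Section OrthoprojLimits.
Context {R : realType} {I : Type} {F : set_system I}.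
Variables (N k p : nat) (U : I -> 'M[R]_(k, N)) (T : 'M[R]_(p, N)).
Hypothesis cvgU : (fun i => orthoproj (U i)) @ F --> orthoproj T.

Lemma orthoproj_lim_ker {FF : ProperFilter F} (z : 'cV[R]_N) :
  (forall i, U i *m z = 0) -> T *m z = 0.
Proof.
move=> Uz; apply/eqP; rewrite -trmx_mul_orthoproj_eq0; apply/eqP.
have zP : (fun i => z^T *m orthoproj (U i)) @ F --> z^T *m orthoproj T.
  exact: cvg_mulmx (cvg_cst _) cvgU.
have Pz0 : (fun i => z^T *m orthoproj (U i)) = fun=> 0.
  by apply/funext => i; apply/eqP; rewrite trmx_mul_orthoproj_eq0 Uz.
by rewrite Pz0 in zP; apply: (cvg_unique _ zP) => //; exact: cvg_cst.
Qed.

Lemma orthoproj_lim_sub {FF : ProperFilter F} q (u : 'M[R]_(q, N))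
    (w : I -> 'M[R]_(q, N)) :
  (forall i, ((u + w i)%R <= U i)%MS) -> w @ F --> (0 : 'M[R]_(q, N)) ->
  (u <= T)%MS.
Proof.
move=> uwU w0.
suff <- : u *m orthoproj T = u.
  exact: submx_trans (submxMl _ _) (orthoproj_sub T).
have uP i : u *m orthoproj (U i) = u + w i *m (1%:M - orthoproj (U i)).
  by rewrite mulmxBr mulmx1 addrA -(orthoproj_id (uwU i)) mulmxDl addrK.
have uPu : (fun i => u + w i *m (1%:M - orthoproj (U i))) @ F
           --> u + 0 *m (1%:M - orthoproj T).
  exact: cvgD (cvg_cst _) (cvg_mulmx w0 (cvgB (cvg_cst _) cvgU)).
rewrite mul0mx addr0 -(funext uP) in uPu.
exact: cvg_unique _ (cvg_mulmx (cvg_cst u) cvgU) uPu.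
Qed.

End OrthoprojLimits.

Section EmbedA.
Variables (R : realType) (n m : nat).

Lemma embedA_col (A : 'M[R]_n) :
  embedA m A = col_mx (A *m x_embed) s_embed.
Proof. by rewrite /embedA /x_embed !mul_mx_row !mulmx1 !mulmx0. Qed.

Lemma rank_embedA (A : 'M[R]_n) : \rank (embedA m A) = (\rank A + m)%N.
Proof.
have -> : embedA m A = block_mx (row_mx A 0) 0 0 1%:M.
  by rewrite embedA_col /x_embed /s_embed !mul_mx_row !mulmx1 !mulmx0.
by rewrite rank_diag_block_mx rank_row_mx0 mxrank1.
Qed.

Lemma t_axis_ker_decomp p (T : 'M[R]_(p, n + 1 + m)) : T *m t_axis = 0 ->
  T = lsubmx (lsubmx T) *m x_embed + rsubmx T *m s_embed.
Proof.
have T_blocks :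
    T = row_mx (row_mx (lsubmx (lsubmx T)) (rsubmx (lsubmx T))) (rsubmx T).
  by rewrite !hsubmxK.
rewrite {1}T_blocks /t_axis !mul_row_col !mulmx0 mulmx1 addr0 add0r => Tt0.
rewrite {1}T_blocks Tt0 /x_embed /s_embed !mul_mx_row !mulmx1 !mulmx0.
by rewrite !add_row_mx !addr0 !add0r.
Qed.

Lemma eqmx_embedA (T : 'M[R]_(n + 1 + m)) :
  \rank T = n -> T *m t_axis = 0 -> (s_embed <= T)%MS ->
  exists A : 'M[R]_n, \rank A = (n - m)%N /\ (T == embedA m A)%MS.
Proof.
move=> rankT Tt sT; set T1 := lsubmx (lsubmx T).
have decT := t_axis_ker_decomp Tt.
have A_T1 : (<<T1>> :=: T1)%MS := genmxE T1.
have TA : (T == embedA m <<T1>>)%MS.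
  rewrite embedA_col -addsmxE; apply/andP; split.
    rewrite {1}decT addmx_sub_adds ?submxMl //.
    by apply: submxMr; rewrite A_T1.
  rewrite col_mx_sub sT andbT.
  apply: submx_trans (_ : T1 *m x_embed <= T)%MS.
    by apply: submxMr; rewrite A_T1.
  rewrite (_ : T1 *m x_embed = T - rsubmx T *m s_embed).
    by rewrite addmx_sub // eqmx_opp (submx_trans (submxMl _ _) sT).
  by rewrite {1}decT addrK.
exists <<T1>>%MS; split => //.
have := eqmx_rank TA; rewrite rankT rank_embedA => rankTA.
by rewrite [in RHS]rankTA addnK.
Qed.

End EmbedA.

Lemma leq2_of_pos_lt_ratio (R : realFieldType) (L : nat) (theta : R) :
  0 < theta -> theta < (L%:R - 1) / L%:R -> (2 <= L)%N.
Proof.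
move=> theta0; case: L => [|[|//]]; rewrite ?invr0 ?mulr0 ?subrr ?mul0r => thetaL;
  by have := lt_trans theta0 thetaL; rewrite ltxx.
Qed.

Section SLiftLimit.
Context {R : realType} {n m : nat} (F : 'rV[R]_n -> R -> 'rV[R]_m).
Variables (L : nat) (theta C d : R) (x0 : 'rV[R]_n).
Variables (xs : nat -> 'rV[R]_n) (ts : nat -> R) (ss : nat -> 'rV[R]_m).
Hypotheses (theta0 : 0 < theta) (thetaL : theta < (L%:R - 1) / L%:R).
Hypotheses (C0 : 0 <= C) (d0 : 0 < d).
Hypothesis grad : forall x t, enorm (x - x0) < d -> `|t| < d ->
  ~~ SingFtilde F x t -> enorm (F x t) `^ theta <= C * nuF F t x.
Hypothesis onX : forall k i, F (xs k) (ts k) 0 i = ss k 0 i ^+ L.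
Hypothesis nsing : forall k, ~~ SingFtilde F (xs k) (ts k).
Hypotheses (xs_x0 : xs @ \oo --> x0) (ts0 : ts @ \oo --> 0)
           (ss0 : ss @ \oo --> (0 : 'rV[R]_m)).

Lemma s_lift_cvg0 j :
  (fun k => s_lift (JxF F (ts k) (xs k)) L (ss k) j) @ \oo --> (0 : 'rV[R]_n).
Proof.
have L2 := leq2_of_pos_lt_ratio theta0 thetaL.
have L_gt0 : (0 : R) < L%:R by rewrite ltr0n; case: (L) L2.
set al := L%:R - 1 - L%:R * theta.
have al0 : 0 < al by move: thetaL; rewrite ltr_pdivlMr // /al; lra.
have xs_near : \forall k \near \oo, enorm (xs k - x0) < d.
  have : (fun k => enorm (xs k - x0)) @ \oo --> enorm (x0 - x0).
    exact: continuous_cvg (@enorm_continuous R n _) (cvgB xs_x0 (cvg_cst _)).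
  by rewrite subrr enorm0 => /cvgr_lt; apply.
have ts_near : \forall k \near \oo, `|ts k| < d := cvgr0_norm_lt _ ts0 _ d0.
apply: norm_cvg0.
apply: (@squeeze_cvgr _ _ _ _ (fun=> 0)
  (fun k => L%:R * C * `|ss k 0 j| `^ al)).
- near=> k; rewrite normr_ge0 /=; apply: le_trans (normr_le_enorm _) _.
  apply: enorm_s_lift_le; rewrite ?(ltW theta0) //.
    exact/row_free_gram_unit/row_free_JxF.
  rewrite -nuFE; apply: grad (nsing k); first by near: k; exact: xs_near.
  by near: k; exact: ts_near.
- exact: cvg_cst.
- rewrite -(mulr0 (L%:R * C)); apply: cvgM; first exact: cvg_cst.
  by apply: powR_norm_cvg0 al0 _; move/cvg_mxP: ss0 => /(_ 0 j); rewrite mxE.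
Unshelve. all: by end_near. Qed.

End SLiftLimit.

Theorem lemma3p4 (R : realType) (n m : nat) (F : 'rV[R]_n -> R -> 'rV[R]_m)
  (U : set 'rV[R]_(n + 1)) (theta : R) (L : nat)
  (x0 : 'rV[R]_n) (xs : nat -> 'rV[R]_n) (ts : nat -> R) (ss : nat -> 'rV[R]_m)
  (T : 'M[R]_(n + 1 + m)) :
  (m <= n)%N -> (2 <= m)%N ->
  open U -> U (xt 0 0) ->
  (forall i : 'I_m, analytic_on U (fun z : 'rV[R]_(n + 1) =>
       F (lsubmx z) (rsubmx z 0 0) 0 i)) ->
  F 0 0 = 0 ->
  0 < theta -> theta < 1 ->
  (forall y0 : 'rV[R]_n, U (xt y0 0) -> F y0 0 = 0 -> SingFt F 0 y0 ->
     y0 != 0 ->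
     exists c : R, 0 < c /\ exists delta : R, 0 < delta /\
       forall (x : 'rV[R]_n) (t : R), enorm (x - y0) < delta -> `|t| < delta ->
         ~~ SingFtilde F x t -> (enorm (F x t)) `^ theta <= c * nuF F t x) ->
  theta < (L%:R - 1) / L%:R ->
  U (xt x0 0) -> F x0 0 = 0 -> SingFt F 0 x0 -> x0 != 0 ->
  (forall k (i : 'I_m), F (xs k) (ts k) 0 i = ss k 0 i ^+ L) ->
  (forall k, ~~ SingFtilde F (xs k) (ts k)) ->
  xs @ \oo --> x0 -> ts @ \oo --> (0 : R) -> ss @ \oo --> (0 : 'rV[R]_m) ->
  \rank T = n ->
  (fun k => orthoproj (tangent_fibre F L (xs k) (ts k) (ss k))) @ \oo
     --> orthoproj T ->
  exists A : 'M[R]_n, \rank A = (n - m)%N /\ (T == embedA m A)%MS.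
Proof.
move=> _ _ _ _ _ _ theta0 _ grad thetaL Ux0 Fx0 Sx0 x0_neq0 onX nsing
  xs_x0 ts0 ss0 rankT cvgT.
have [C [C_gt0 [d [d0 grad_x0]]]] := grad x0 Ux0 Fx0 Sx0 x0_neq0.
apply: eqmx_embedA rankT _ _.
  by apply: (orthoproj_lim_ker cvgT) => k; exact: tangent_fibre_t_axis.
apply/row_subP => j; apply: (orthoproj_lim_sub cvgT) => [k|].
  exact: tangent_fibre_s_lift.
rewrite -(mul0mx _ x_embed); apply: cvg_mulmx (cvg_cst _).
exact: s_lift_cvg0 (ltW C_gt0) d0 grad_x0 onX nsing xs_x0 ts0 ss0 j.
Qed.
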